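(* Let $L$ be a finite $\mathcal{L}$-lattice with $|L|\le n$. Then $L$ has the interpolation property iff every valid $a\le b$ with at most $n$ left variables has an interpolant, i.e. a formula $i$ whose variables are all intersection variables of $a,b$ such that $a\le i$ and $i\le b$ are valid.
   Context: A lattice-oriented signature $\mathcal{L}$ is a finite set of connectives. Each connective $c$ has an arity $n_c\in\mathbb{N}$ and a polarity $p_c:\{1,\dots,n_c\}\to\{-,+\}$. The signature contains binary connectives $\lor,\land,\to$ with $p_\lor(1)=p_\lor(2)=p_\land(1)=p_\land(2)=+$, $p_\to(1)=-$ and $p_\to(2)=+$; nullary connectives are truth constants. A finite $\mathcal{L}$-lattice is a finite set $L$ together with an $n_c$-ary operation $c^L$ on $L$ for each connective $c$, such that: - $(L,\lor^L,\land^L)$ is a lattice, with order $x\le y$ iff $x\land y=x$; its top element is denoted $1$; - $c^L$ is monotone in every argument $i$ with $p_c(i)=+$ and antitone in every argument $i$ with $p_c(i)=-$; - for all $a,b\in L$: $1\le a\to^L b$ iff $a\le b$. Formulas (words) are built from propositional variables using the connectives. A valuation assigns elements of $L$ to the variables and extends to all formulas via the operations $c^L$. For formulas $a,b$, ''$a\le b$ is valid'' means that the value of $a$ is $\le$ the value of $b$ under every valuation. For a valid $a\le b$, the variables occurring only in $a$ are the left variables, those occurring only in $b$ are the right variables, and those occurring in both are the intersection variables. $L$ has the interpolation property iff for all formulas $a,b$ with $a\le b$ valid there is a formula $i$ whose variables are all intersection variables of $a,b$ such that $a\le i$ and $i\le b$ are valid. If there are no intersection variables, $i$ must be a closed formula.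 *)

From HB Require Import structures.
From mathcomp Require Import all_boot all_order.
Set Implicit Arguments. Unset Strict Implicit. Unset Printing Implicit Defensive.
Import Order.TTheory.
Local Open Scope order_scope.

(* A lattice-oriented signature: the three binary connectives \/, /\, -> are
   built into the syntax (constructors Join, Meet, Imp below); [conn] is the
   finite set of the remaining connectives, each with an arity and a polarity
   (true = +, false = -). Nullary connectives are truth constants. *)
Record signature := Signature {
  conn : finType;
  arity : conn -> nat;
  pol : forall c : conn, 'I_(arity c) -> bool }.

Inductive form (S : signature) : Type :=
| Var : nat -> form S
| Join : form S -> form S -> form S
| Meet : form S -> form S -> form S
| Imp : form S -> form S -> form S
| App : forall c : conn S, ('I_(arity c) -> form S) -> form S.

Arguments Var {S} _.

Fixpoint vars (S : signature) (t : form S) : seq nat :=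
  match t with
  | Var x => [:: x]
  | Join a b | Meet a b | Imp a b => vars a ++ vars b
  | App c f => flatten (map (fun i => vars (f i)) (enum 'I_(arity c)))
  end.

Section Semantics.
Variables (S : signature) (d : Order.disp_t) (L : finTBLatticeType d)
          (imp : L -> L -> L) (op : forall c : conn S, ('I_(arity c) -> L) -> L).

(* Conditions making (L, join, meet, imp, op) a finite L-lattice.
   The lattice structure and finiteness are given by [finTBLatticeType]. *)
Definition is_LLattice : Prop :=
  (forall a a' b b' : L, a' <= a -> b <= b' -> imp a b <= imp a' b')
  /\ (forall (c : conn S) (g h : 'I_(arity c) -> L),
        (forall i, if pol i then g i <= h i else h i <= g i) -> op g <= op h)
  /\ (forall a b : L, \top <= imp a b <-> a <= b).

Fixpoint eval (v : nat -> L) (t : form S) : L :=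
  match t with
  | Var x => v x
  | Join a b => eval v a `|` eval v b
  | Meet a b => eval v a `&` eval v b
  | Imp a b => imp (eval v a) (eval v b)
  | App c f => op (fun i => eval v (f i))
  end.

Definition valid (a b : form S) : Prop := forall v : nat -> L, eval v a <= eval v b.

Definition left_vars (a b : form S) : seq nat :=
  undup [seq x <- vars a | x \notin vars b].

Definition interpolant (a b i : form S) : Prop :=
  (forall x, x \in vars i -> (x \in vars a) && (x \in vars b))
  /\ valid a i /\ valid i b.

Definition interpolation_property : Prop :=
  forall a b : form S, valid a b -> exists i : form S, interpolant a b i.

End Semantics.

From mathcomp Require Import all_boot all_order.
From Stdlib Require Import FunctionalExtensionality.
Set Implicit Arguments. Unset Strict Implicit. Unset Printing Implicit Defensive.
Import Order.TTheory.

(* Given a valid [a <= b] with arbitrarily many left variables, rename the left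
   variables of [a] into fresh variables [N + j], [j < #|L|], in every possible
   way, and let [a'] be the join of all these copies.  Then [a' <= b] is valid and
   has at most [#|L| <= n] left variables.  Every valuation of [a] is simulated by
   a valuation of one of the copies (encode the value of each left variable by its
   rank in [enum L]), so any interpolant of [a' <= b] is one of [a <= b]. *)

Section Syntax.
Variable S : signature.

Definition form_ind' (P : form S -> Prop)
  (HV : forall x, P (Var x))
  (HJ : forall a b, P a -> P b -> P (Join a b))
  (HM : forall a b, P a -> P b -> P (Meet a b))
  (HI : forall a b, P a -> P b -> P (Imp a b))
  (HA : forall c f, (forall i, P (f i)) -> P (@App S c f)) : forall t, P t :=
  fix F t := match t with
  | Var x => HV x
  | Join a b => HJ a b (F a) (F b)
  | Meet a b => HM a b (F a) (F b)
  | Imp a b => HI a b (F a) (F b)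
  | App c f => HA c f (fun i => F (f i))
  end.

Fixpoint rename (r : nat -> nat) (t : form S) : form S :=
  match t with
  | Var x => Var (r x)
  | Join a b => Join (rename r a) (rename r b)
  | Meet a b => Meet (rename r a) (rename r b)
  | Imp a b => Imp (rename r a) (rename r b)
  | App c f => @App S c (fun i => rename r (f i))
  end.

Definition Joins (t : form S) (ts : seq (form S)) : form S := foldr (@Join S) t ts.

Lemma vars_rename r t : vars (rename r t) = map r (vars t).
Proof.
elim/form_ind': t => [x|a b IHa IHb|a b IHa IHb|a b IHa IHb|c f IH] /=;
  rewrite ?map_cat ?IHa ?IHb //.
by rewrite map_flatten -map_comp; congr flatten; apply: eq_map => i /=.
Qed.

Lemma mem_vars_App (c : conn S) (f : 'I_(arity c) -> form S) i x :
  x \in vars (f i) -> x \in vars (App f).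
Proof.
by move=> xfi; apply/flattenP; exists (vars (f i)); rewrite // map_f ?mem_enum.
Qed.

Lemma mem_vars_Joins t ts x :
  (x \in vars (Joins t ts)) = has (fun u => x \in vars u) (t :: ts).
Proof.
elim: ts => [|u ts IH] /=; first by rewrite orbF.
by rewrite mem_cat IH /= orbCA.
Qed.

End Syntax.

Section Evaluation.
Local Open Scope order_scope.
Variables (S : signature) (d : Order.disp_t) (L : finTBLatticeType d)
  (imp : L -> L -> L) (op : forall c : conn S, ('I_(arity c) -> L) -> L).

Local Notation eval := (eval imp op).
Local Notation valid := (valid imp op).
Local Notation interpolant := (interpolant imp op).

Lemma eval_rename v r t : eval v (rename r t) = eval (v \o r) t.
Proof.
elim/form_ind': t => [x|a b IHa IHb|a b IHa IHb|a b IHa IHb|c f IH] /=;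
  rewrite ?IHa ?IHb //.
by congr op; apply: functional_extensionality => i.
Qed.

Lemma eq_eval v w t : {in vars t, v =1 w} -> eval v t = eval w t.
Proof.
elim/form_ind': t => [x|a b IHa IHb|a b IHa IHb|a b IHa IHb|c f IH] /= vw;
  try by rewrite IHa ?IHb // => x xt; apply: vw; rewrite mem_cat xt ?orbT.
- by apply: vw; rewrite inE.
- congr op; apply: functional_extensionality => i; apply: IH => x xfi.
  exact/vw/mem_vars_App/xfi.
Qed.

Lemma eval_Joins_le v t ts (x : L) :
  (eval v (Joins t ts) <= x) = all (fun u => eval v u <= x) (t :: ts).
Proof.
elim: ts => [|u ts IH] /=; first by rewrite andbT.
by rewrite leUx IH /= andbCA.
Qed.

Lemma eval_le_Joins (T : eqType) (F : T -> form S) v j0 js j :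
  j \in j0 :: js -> eval v (F j) <= eval v (Joins (F j0) (map F js)).
Proof.
set J := Joins (F j0) (map F js); move=> jjs.
have := eval_Joins_le v (F j0) (map F js) (eval v J).
by rewrite lexx -map_cons all_map => /esym/allP; apply.
Qed.

Lemma valid_rename r a b :
  {in vars b, r =1 id} -> valid a b -> valid (rename r a) b.
Proof.
move=> rb ab v; rewrite eval_rename (le_trans (ab _)) //.
by rewrite (eq_eval (w := v)) // => x /rb /= ->.
Qed.

Lemma interpolant_transfer a a' b i :
  (forall x, x \in vars a' -> x \in vars b -> x \in vars a) ->
  (forall v, exists2 w, {in vars b, w =1 v} & eval v a <= eval w a') ->
  interpolant a' b i -> interpolant a b i.
Proof.
move=> a'ab cover [ivars [a'i ib]]; split; [|split] => // [x /ivars|v].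
  by case/andP=> xa' xb; rewrite xb a'ab.
have [w wv va] := cover v; apply: le_trans va (le_trans (a'i w) _).
by rewrite (eq_eval (w := v)) // => x /ivars /andP[_ /wv].
Qed.

Section Copies.
Variables a b : form S.

Let lv := left_vars a b.
Let k := size lv.
Let N := (\max_(x <- vars b) x).+1.

Let code (y : L) : nat := index y (enum L).
Let decode (j : nat) : L := nth \top (enum L) j.

Definition copy_renaming (s : k.-tuple L) (x : nat) : nat :=
  if x \in vars b then x else N + code (nth \top s (index x lv)).

Definition copy (s : k.-tuple L) : form S := rename (copy_renaming s) a.

Definition copies : form S :=
  Joins (copy (nseq_tuple k \top)) (map copy (enum {: k.-tuple L})).

Lemma vars_b_lt_fresh x : x \in vars b -> (x < N)%N.
Proof. by move=> xb; rewrite /N ltnS (leq_bigmax_seq (F := id) _ xb). Qed.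

Lemma mem_vars_copies x :
  x \in vars copies -> exists s, exists2 y, y \in vars a & x = copy_renaming s y.
Proof.
rewrite mem_vars_Joins -map_cons has_map => /hasP[s _] /=.
by rewrite /copy vars_rename => /mapP[y ya ->]; exists s, y.
Qed.

Lemma valid_copies : valid a b -> valid copies b.
Proof.
move=> ab v; rewrite eval_Joins_le -map_cons all_map.
by apply/allP => s _; apply: valid_rename => // x xb; rewrite /copy_renaming xb.
Qed.

Lemma vars_copies_vars_b x : x \in vars copies -> x \in vars b -> x \in vars a.
Proof.
case/mem_vars_copies=> s [y ya ->]; rewrite /copy_renaming.
by case: ifP => // _ /vars_b_lt_fresh; rewrite ltnNge leq_addr.
Qed.

Lemma size_left_vars_copies : (size (left_vars copies b) <= #|L|)%N.
Proof.
rewrite -(size_iota 0 #|L|) -(size_map (addn N) (iota 0 _)).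
apply: uniq_leq_size; first exact: undup_uniq.
move=> x; rewrite /left_vars mem_undup mem_filter.
case/andP=> xNb /mem_vars_copies[s [y _ xy]].
move: xNb; rewrite xy /copy_renaming; case: ifP => [->//|_ _].
by rewrite map_f // mem_iota add0n /code cardE index_mem mem_enum.
Qed.

(* The copy indexed by the tuple of values of the left variables, together with
   the valuation decoding the fresh variables, reproduces [v] on [a]. *)
Lemma copies_cover v :
  exists2 w, {in vars b, w =1 v} & eval v a <= eval w copies.
Proof.
pose s : k.-tuple L := map_tuple v (in_tuple lv).
pose w x := if (N <= x)%N then decode (x - N) else v x.
have wv : {in vars b, w =1 v}.
  by move=> x /vars_b_lt_fresh xb; rewrite /w leqNgt xb.
have copy_s : s \in nseq_tuple k \top :: enum {: k.-tuple L}.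
  by rewrite inE mem_enum orbT.
exists w => //; apply: le_trans (eval_le_Joins copy w copy_s).
rewrite /copy eval_rename (eq_eval (w := w \o copy_renaming s)) ?lexx // => x xa /=.
rewrite /copy_renaming; case: ifP => [xb|xNb]; first by rewrite wv.
have xlv : x \in lv by rewrite mem_undup mem_filter xNb xa.
have ixk : (index x lv < size lv)%N by rewrite index_mem.
rewrite /w leq_addr addKn /decode /code nth_index ?mem_enum //=.
by rewrite (set_nth_default (v 0)) ?size_map // (nth_map 0) // nth_index.
Qed.

End Copies.
End Evaluation.

Theorem lemma1 (S : signature) (d : Order.disp_t) (L : finTBLatticeType d)
  (imp : L -> L -> L) (op : forall c : conn S, ('I_(arity c) -> L) -> L)
  (HL : is_LLattice imp op) (n : nat) (Hn : #|L| <= n) :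
  interpolation_property imp op <->
  (forall a b : form S, valid imp op a b -> size (left_vars a b) <= n ->
     exists i : form S, interpolant imp op a b i).
Proof.
split=> [IP a b ab _ | bounded a b ab]; first exact: IP.
have [|i a'bi] := bounded _ b (valid_copies ab).
  by apply: leq_trans Hn; apply: size_left_vars_copies.
exists i; apply: interpolant_transfer a'bi.
- exact: vars_copies_vars_b.
- exact: copies_cover.
Qed.
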